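(* There exist absolute constants $c_1$, $c_2$ and $c_3$ for which the following holds. Let $v \in \mathbb{R}^N$ and suppose there are $A,B>0$ and $1 \leq \alpha \leq 2$ such that for every $I \subset \{1,\dots,N\}$, $$ \Big(\sum_{i \in I} v_i^2 \Big)^{1/2} \leq A + B \sqrt{|I|}\log^{1/\alpha}\left(eN/|I|\right). $$ If $\beta \geq c_1B\max\{ \log^{1/\alpha}(c_2NB^2/A^2),1\}$ and $E_\beta = \{i: |v_i| \geq \beta \}$, then $$ |E_\beta| \leq \max \left\{ \frac{4A^2}{\beta^2}, eN \exp(-(\beta/2B)^{\alpha})\right\} \quad \text{and} \quad \Big(\sum_{i \in E_\beta} v_i^2\Big)^{1/2} \leq c_3 A. $$ *)

From HB Require Import structures.
From mathcomp Require Import all_boot all_order all_algebra.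
From mathcomp Require Import all_classical all_reals all_analysis.
Set Implicit Arguments. Unset Strict Implicit. Unset Printing Implicit Defensive.

(* Let E be the set of coordinates with |v_i| >= beta, k = |E| > 0 and L = log(eN/k) >= 1,
   so that k = eN exp(-L).  Since sqrt(k) beta <= ||v_E|| <= A + B sqrt(k) L^(1/alpha),
   either beta >= 2B L^(1/alpha), and then sqrt(k) beta <= ||v_E|| <= 2A, or
   (beta/2B)^alpha < L, which is the bound on k.  In the second case the lower bound on
   beta forces log(NB^2/A^2) <= L/2, whence B^2 k L^2 = e (N B^2) exp(-L) L^2
   <= e A^2 L^2 exp(-L/2) <= 64 A^2 and ||v_E|| <= A + B sqrt(k) L <= 9A.
   The constants are c1 = 8, c2 = 1, c3 = 9, and only alpha >= 1 is used. *)

From HB Require Import structures.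
From mathcomp Require Import all_boot all_order all_algebra.
From mathcomp Require Import all_classical all_reals all_analysis.
From mathcomp Require Import ring lra.
Set Implicit Arguments. Unset Strict Implicit. Unset Printing Implicit Defensive.
Import Order.TTheory GRing.Theory Num.Theory.
Local Open Scope ring_scope.

Lemma sqrt_card_mul_le_sqrt_sum (R : rcfType) (T : finType) (E : {set T})
    (v : T -> R) (beta : R) :
  0 <= beta -> {in E, forall i, beta <= `|v i|} ->
  Num.sqrt #|E|%:R * beta <= Num.sqrt (\sum_(i in E) v i ^+ 2).
Proof.
move=> beta_ge0 Ebeta.
rewrite -[beta in leLHS]ger0_norm // -sqrtr_sqr -sqrtrM ?ler0n //.
apply: ler_wsqrtr; rewrite mulr_natl -sumr_const; apply: ler_sum => i Ei.
by rewrite -(real_normK (num_real (v i))) lerXn2r ?nnegrE ?Ebeta.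
Qed.

Lemma expR1_le4 (R : realType) : expR 1 <= 4 :> R.
Proof.
have half_bound : 1 - 2^-1 <= expR (- 2^-1) :> R := expR_ge1Dx _.
have expR_half_gt0 : 0 < expR (2^-1 : R) := expR_gt0 _.
have -> : expR 1 = expR (2^-1) * expR (2^-1) :> R.
  by rewrite -expRD; congr expR; field.
rewrite expRN in half_bound.
have : expR (2^-1 : R) * (expR (2^-1))^-1 = 1 by rewrite mulfV // gt_eqF.
nra.
Qed.

Lemma sqr_le_expR_half (R : realType) (L : R) :
  0 <= L -> L ^+ 2 <= 16 * expR (L / 2).
Proof.
move=> L_ge0.
have : 1 + L / 4 <= expR (L / 4) := expR_ge1Dx _.
have -> : expR (L / 2) = expR (L / 4) * expR (L / 4).
  by rewrite -expRD; congr expR; field.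
nra.
Qed.

Lemma powR_lt_of_lt_powRV (R : realType) (a x L : R) :
  0 < a -> 0 <= x -> 0 <= L -> x < powR L a^-1 -> powR x a < L.
Proof.
move=> a_gt0 x_ge0 L_ge0 /(gt0_ltr_powR a_gt0).
rewrite !nnegrE -powRrM mulVf ?gt_eqF // powRr1 //.
by apply; rewrite ?powR_ge0.
Qed.

Lemma powRV_le_double (R : realType) (a m L : R) :
  1 <= a -> 0 <= L -> L <= 2 * m -> powR L a^-1 <= 2 * powR m a^-1.
Proof.
move=> a_ge1 L_ge0 L_le.
have m_ge0 : 0 <= m by lra.
apply: (le_trans (y := powR (2 * m) a^-1)).
  by apply: ge0_ler_powR; rewrite ?nnegrE ?invr_ge0; lra.
rewrite powRM; try lra.
apply: ler_wpM2r; first exact: powR_ge0.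
by apply: ler1_powR; rewrite ?invr_ge0 ?invf_le1; lra.
Qed.

Lemma ln_e_mul_div_ge1 (R : realType) (N k : R) :
  0 < k -> k <= N -> 1 <= ln (expR 1 * N / k).
Proof.
move=> k_gt0 k_le_N.
rewrite -[leLHS](expRK 1) ler_ln ?posrE ?expR_gt0 ?divr_gt0 ?mulr_gt0 ?expR_gt0 //; try lra.
by rewrite ler_pdivlMr // ler_pM2l ?expR_gt0.
Qed.

Lemma e_mul_expRN_ln (R : realType) (N k : R) :
  0 < k -> 0 < N -> expR 1 * N * expR (- ln (expR 1 * N / k)) = k.
Proof.
move=> k_gt0 N_gt0.
rewrite expRN lnK ?posrE ?divr_gt0 ?mulr_gt0 ?expR_gt0 //.
by field; rewrite !gt_eqF ?expR_gt0.
Qed.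

Lemma threshold_small_case (R : realFieldType) (A B s beta P T : R) :
  0 <= s -> 0 < beta -> 0 <= B -> s * beta <= T -> T <= A + B * s * P ->
  2 * B * P <= beta -> s ^+ 2 <= 4 * A ^+ 2 / beta ^+ 2 /\ T <= 2 * A.
Proof.
move=> s_ge0 beta_gt0 B_ge0 sbeta_le_T T_le BP_le.
have := ler_wpM2l s_ge0 BP_le => sBP_le.
have sbeta_le : s * beta <= 2 * A by nra.
split; last by nra.
rewrite ler_pdivlMr ?exprn_gt0 //.
by have := mulr_ge0 s_ge0 (ltW beta_gt0); nra.
Qed.

Lemma ln_le_half_of_lt_powRV (R : realType) (M B alpha beta L : R) :
  0 < B -> 1 <= alpha -> 0 <= L ->
  8 * B * Num.max (powR (Num.max (ln M) 0) alpha^-1) 1 <= beta ->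
  beta < 2 * B * powR L alpha^-1 -> ln M <= L / 2.
Proof.
move=> B_gt0 alpha_ge1 L_ge0 beta_ge beta_lt.
rewrite leNgt; apply/negP => lnM_gt.
have lnM_ge0 : 0 <= ln M by lra.
rewrite (max_l lnM_ge0) in beta_ge.
set p := powR (ln M) alpha^-1 in beta_ge *.
have P_le : powR L alpha^-1 <= 2 * p by apply: powRV_le_double => //; lra.
have p_le : p <= Num.max p 1 by rewrite le_max lexx.
have one_le : 1 <= Num.max p 1 by rewrite le_max lexx orbT.
have := ler_wpM2l (ltW B_gt0) P_le.
have := ler_wpM2l (ltW B_gt0) p_le.
have := ler_wpM2l (ltW B_gt0) one_le.
lra.
Qed.

Lemma mul_sqrt_ln_le (R : realType) (A B N L : R) :
  0 < A -> 0 < B -> 0 < N -> 0 <= L -> ln (N * B ^+ 2 / A ^+ 2) <= L / 2 ->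
  B * Num.sqrt (expR 1 * N * expR (- L)) * L <= 8 * A.
Proof.
move=> A_gt0 B_gt0 N_gt0 L_ge0.
have [B_ge0 N_ge0] := (ltW B_gt0, ltW N_gt0).
have M_gt0 : 0 < N * B ^+ 2 / A ^+ 2 by rewrite divr_gt0 ?mulr_gt0 ?exprn_gt0.
rewrite -ler_expR lnK ?posrE // ler_pdivrMr ?exprn_gt0 // => NB_le.
set X := expR (L / 2).
have X_gt0 : 0 < X := expR_gt0 _.
have eL : expR (- L) * X * X = 1.
  by rewrite /X -!expRD (_ : - L + L / 2 + L / 2 = 0) ?expR0 //; field.
have eN_ge0 : 0 <= expR 1 * N * expR (- L) by rewrite !mulr_ge0 ?expR_ge0.
have L2_le := sqr_le_expR_half L_ge0.
have e_le4 := expR1_le4 R.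
rewrite -(ler_pXn2r (n := 2)) ?nnegrE ?mulr_ge0 ?sqrtr_ge0 //; try lra.
rewrite !exprMn sqr_sqrtr //.
have -> : B ^+ 2 * (expR 1 * N * expR (- L)) * L ^+ 2
          = expR 1 * expR (- L) * (N * B ^+ 2) * L ^+ 2 by ring.
apply: le_trans (_ : _ <= expR 1 * expR (- L) * (X * A ^+ 2) * (16 * X)) _.
  apply: ler_pM => //; rewrite ?mulr_ge0 ?expR_ge0 ?sqr_ge0 //.
  by apply: ler_wpM2l; rewrite ?mulr_ge0 ?expR_ge0.
have -> : expR 1 * expR (- L) * (X * A ^+ 2) * (16 * X)
          = 16 * expR 1 * A ^+ 2 * (expR (- L) * X * X) by ring.
by rewrite eL mulr1; have := sqr_ge0 A; nra.
Qed.

Theorem lemma4p2 (R : realType) :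
  exists c1 c2 c3 : R, 0 < c1 /\ 0 < c2 /\ 0 < c3 /\
  forall (N : nat) (v : 'I_N -> R) (A B alpha beta : R),
    0 < A -> 0 < B -> 1 <= alpha -> alpha <= 2 ->
    (forall I : {set 'I_N},
        Num.sqrt (\sum_(i in I) v i ^+ 2)
          <= A + B * Num.sqrt (#|I|%:R)
                   * powR (ln (expR 1 * N%:R / #|I|%:R)) alpha^-1) ->
    c1 * B * Num.max (powR (Num.max (ln (c2 * N%:R * B ^+ 2 / A ^+ 2)) 0) alpha^-1) 1
      <= beta ->
    #|[set i | beta <= `|v i| ]|%:R
      <= Num.max (4 * A ^+ 2 / beta ^+ 2)
                 (expR 1 * N%:R * expR (- powR (beta / (2 * B)) alpha))
    /\ Num.sqrt (\sum_(i in [set i | beta <= `|v i| ]) v i ^+ 2) <= c3 * A.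
Proof.
exists 8, 1, 9; do 3!split=> //.
move=> N v A B alpha beta A_gt0 B_gt0 alpha_ge1 _ hyp.
rewrite mul1r => beta_ge.
set E := [set i | beta <= `|v i| ].
have beta_gt0 : 0 < beta.
  by apply: lt_le_trans beta_ge; rewrite !mulr_gt0 // lt_max ltr01 orbT.
have sqrt_le_T : Num.sqrt #|E|%:R * beta <= Num.sqrt (\sum_(i in E) v i ^+ 2).
  by apply: sqrt_card_mul_le_sqrt_sum (ltW beta_gt0) _ => i; rewrite inE.
have T_le := hyp E.
have [E0 | E_gt0] := posnP #|E|.
  rewrite (cards0_eq E0) cards0 big_set0 sqrtr0.
  split; first by rewrite le_max divr_ge0 ?mulr_ge0 ?ler0n ?ltW.
  by rewrite mulr_ge0 // ltW.
set k : R := #|E|%:R in sqrt_le_T T_le *.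
set L := ln (expR 1 * N%:R / k) in T_le *.
have k_gt0 : 0 < k by rewrite ltr0n.
have k_le_N : k <= N%:R by rewrite ler_nat -[X in (_ <= X)%N]card_ord max_card.
have L_ge1 : 1 <= L := ln_e_mul_div_ge1 k_gt0 k_le_N.
have N_gt0 : 0 < N%:R :> R := lt_le_trans k_gt0 k_le_N.
have k_eq : expR 1 * N%:R * expR (- L) = k := e_mul_expRN_ln k_gt0 N_gt0.
case: (leP (2 * B * powR L alpha^-1) beta) => [BP_le | beta_lt].
  have [] := threshold_small_case (sqrtr_ge0 k) beta_gt0 (ltW B_gt0) sqrt_le_T T_le BP_le.
  by rewrite sqr_sqrtr ?ler0n // => k_le T_le2A; split; [rewrite le_max k_le | lra].
split.
  rewrite le_max -k_eq ler_pM2l ?mulr_gt0 ?expR_gt0 // ler_expR lerN2; apply/orP; right.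
  apply/ltW/powR_lt_of_lt_powRV; rewrite ?divr_ge0 ?mulr_ge0 ?ltr_pdivrMr; lra.
have L_ge0 : 0 <= L by lra.
have lnM_le := ln_le_half_of_lt_powRV B_gt0 alpha_ge1 L_ge0 beta_ge beta_lt.
have := mul_sqrt_ln_le A_gt0 B_gt0 N_gt0 L_ge0 lnM_le; rewrite k_eq.
have P_le_L : powR L alpha^-1 <= L by rewrite ler1_powR // invf_le1; lra.
have := ler_wpM2l (mulr_ge0 (ltW B_gt0) (sqrtr_ge0 k)) P_le_L.
lra.
Qed.
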